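(* The quasitriangular Hopf algebra $U_q(H_1,H_2,X^\pm)$ (with universal $R$-matrix $\mathcal R$ as in the context) is a ribbon Hopf algebra: the element $$\nu=e^{i\frac{\pi}{4}H_2^2}q^{-\frac14(H_1^2-H_2^2)}K_1K_2\left(1+(1-q^2)K_1^{-1}K_2^{-1}FE\right)$$ is central and invertible, with inverse $\nu^{-1}=e^{-i\frac{\pi}{4}H_2^2}q^{\frac14(H_1^2-H_2^2)}K_1^{-1}K_2^{-1}\left(1-(1-q^2)K_1K_2FE\right)$, and satisfies $\nu^2=u\,S(u)$, $\Delta\nu=(\mathcal R_{21}\mathcal R)^{-1}(\nu\otimes\nu)$, $\varepsilon(\nu)=1$, $S(\nu)=\nu$, where $u=\sum_iS(b_i)a_i$ for $\mathcal R=\sum_i a_i\otimes b_i$ and $\mathcal R_{21}=\sum_i b_i\otimes a_i$.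
   Context: $q$ is a deformation parameter and exponentials are understood formally. $K_1=q^{H_1/2}$, $K_2=e^{i\frac{\pi}{2}H_2}q^{H_2/2}$, $E=K_2X^+$, $F=K_2^{-1}X^-$. $U_q(H_1,H_2,X^\pm)$ is the Hopf algebra generated by $H_1,H_2,X^\pm$ with relations $[H_1,H_2]=0$, $[H_1,X^\pm]=\pm2X^\pm$, $[H_2,X^\pm]=\mp2X^\pm$, $[X^+,X^-]=\frac{K_1K_2-K_1^{-1}K_2^{-1}}{q-q^{-1}}$, $(X^\pm)^2=0$; coproduct $\Delta H_i=H_i\otimes1+1\otimes H_i$, $\Delta X^+=X^+\otimes K_1+K_2^{-1}\otimes X^+$, $\Delta X^-=X^-\otimes K_2+K_1^{-1}\otimes X^-$; counit $\varepsilon(H_i)=\varepsilon(X^\pm)=0$; antipode $S(H_i)=-H_i$, $S(X^+)=-qK_1^{-1}K_2X^+$, $S(X^-)=qK_1K_2^{-1}X^-$. Universal $R$-matrix $\mathcal{R}=e^{-i\frac{\pi}{4}H_2\otimes H_2}q^{\frac14(H_1\otimes H_1-H_2\otimes H_2)}(1\otimes1+(1-q^2)E\otimes F)$. A quasitriangular Hopf algebra is called ribbon if it has a central element $\nu$ with the four properties listed in the claim. *)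

(* Model of the (completed) Hopf algebra U_q(H1,H2,X^+-) used in the statement.
   "Exponentials understood formally" is read as: the Cartan part consists of
   (arbitrary) functions f(H1,H2) of the two commuting generators, evaluated on
   complex weights (H1,H2) in C^2, and q^x := exp(h x) with q = exp h.
   Since (X^+)^2 = (X^-)^2 = 0, every element of the algebra is uniquely
     x = sum_m x_m(H1,H2) . m,     m in {1, X^+, X^-, X^+X^-}
   (coefficients written on the LEFT), and an element of the (completed)
   tensor square is uniquely
     X = sum_{m,n} X_{m,n}(H1,H2,H1',H2') . (m (x) n)
   where H = H (x) 1 and H' = 1 (x) H. *)
From HB Require Import structures.
From mathcomp Require Import all_boot all_order all_algebra.
From mathcomp Require Import complex.
From mathcomp Require Import reals.
From mathcomp.analysis Require Import sequences exp trigo.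

Set Implicit Arguments.
Unset Strict Implicit.
Unset Printing Implicit Defensive.

Import Order.TTheory GRing.Theory Num.Theory.
Local Open Scope ring_scope.
Local Open Scope complex_scope.

Section UqModel.
Variable R : realType.
Local Notation C := R[i].

Definition cexp (z : C) : C :=
  (expR (complex.Re z))%:C * ((cos (complex.Im z))%:C + 'i * (sin (complex.Im z))%:C).

(** Weights: values of (H1, H2). *)
Definition wts := (C * C)%type.
Definition negw (H : wts) : wts := (- H.1, - H.2).
Definition addw (H H' : wts) : wts := (H.1 + H'.1, H.2 + H'.2).
Definition shift (H w : wts) : wts := (H.1 - w.1, H.2 - w.2).

(** PBW monomials 1, X^+, X^-, X^+ X^-. *)
Inductive mono := M1 | Mp | Mm | Mpm.
Definition monos : seq mono := [:: M1; Mp; Mm; Mpm].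

Definition dl (m p : mono) : C :=
  match m, p with
  | M1, M1 | Mp, Mp | Mm, Mm | Mpm, Mpm => 1
  | _, _ => 0
  end.

(** weight of a monomial: [H1, m] = (wt m).1 m, [H2, m] = (wt m).2 m *)
Definition wt (m : mono) : wts :=
  match m with
  | M1 => (0, 0) | Mp => (2, -2) | Mm => (-2, 2) | Mpm => (0, 0)
  end.
Definition alpha : wts := (2, -2).

Section Param.
Variable h : C.

Definition q : C := cexp h.
Definition qpow (x : C) : C := cexp (h * x).
Definition K1 (H : wts) : C := qpow (H.1 / 2).
Definition K2 (H : wts) : C := cexp ('i * (pi : R)%:C * H.2 / 2) * qpow (H.2 / 2).
(** [X^+, X^-] = (K1 K2 - K1^-1 K2^-1)/(q - q^-1) *)
Definition Cc (H : wts) : C :=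
  (K1 H * K2 H - (K1 H * K2 H)^-1) / (q - q^-1).

(** multiplication table: m * n = sum_p tab m n p (H) . p
    (uses (X^+-)^2 = 0 and X^- X^+ = X^+ X^- - Cc(H),
     and g(H) X^+ = X^+ g(H + alpha)) *)
Definition tab (m n p : mono) (H : wts) : C :=
  match m, n with
  | M1, _ => dl n p
  | _, M1 => dl m p
  | Mp, Mm => dl Mpm p
  | Mp, _ => 0
  | Mm, Mp => dl Mpm p - Cc H * dl M1 p
  | Mm, Mm => 0
  | Mm, Mpm => - Cc H * dl Mm p
  | Mpm, Mp => - Cc (shift H alpha) * dl Mp p
  | Mpm, Mm => 0
  | Mpm, Mpm => - Cc (shift H alpha) * dl Mpm p
  end.

(** The algebra U: x = sum_m (x m)(H) . m *)
Definition U := mono -> wts -> C.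

(* since m . g(H) = g(H - wt m) . m *)
Definition mulU (x y : U) : U := fun p H =>
  \sum_(m <- monos) \sum_(n <- monos) x m H * y n (shift H (wt m)) * tab m n p H.
Definition addU (x y : U) : U := fun p H => x p H + y p H.
Definition scaleU (c : C) (x : U) : U := fun p H => c * x p H.
Definition cartU (f : wts -> C) : U := fun p H => dl p M1 * f H.
Definition monoU (m : mono) : U := fun p _ => dl m p.
Definition oneU : U := monoU M1.

Definition U2 := mono -> mono -> wts -> wts -> C.

Definition mul2 (x y : U2) : U2 := fun p p' H H' =>
  \sum_(m <- monos) \sum_(n <- monos) \sum_(m' <- monos) \sum_(n' <- monos)
    x m m' H H' * y n n' (shift H (wt m)) (shift H' (wt m'))
      * tab m n p H * tab m' n' p' H'.
Definition add2 (x y : U2) : U2 := fun p p' H H' => x p p' H H' + y p p' H H'.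
Definition scale2 (c : C) (x : U2) : U2 := fun p p' H H' => c * x p p' H H'.
Definition tens (x y : U) : U2 := fun m n H H' => x m H * y n H'.
Definition cart2 (f : wts -> wts -> C) : U2 :=
  fun p p' H H' => dl p M1 * dl p' M1 * f H H'.
Definition one2 : U2 := tens oneU oneU.
Definition flip2 (x : U2) : U2 := fun m n H H' => x n m H' H.

Definition DeltaP : U2 :=
  add2 (tens (monoU Mp) (cartU K1)) (tens (cartU (fun H => (K2 H)^-1)) (monoU Mp)).
Definition DeltaM : U2 :=
  add2 (tens (monoU Mm) (cartU K2)) (tens (cartU (fun H => (K1 H)^-1)) (monoU Mm)).
Definition Delta_mono (m : mono) : U2 :=
  match m with
  | M1 => one2 | Mp => DeltaP | Mm => DeltaM | Mpm => mul2 DeltaP DeltaM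
  end.
(** Delta (f(H) m) = f(H (x) 1 + 1 (x) H) Delta(m)   (Delta H_i = H_i(x)1 + 1(x)H_i) *)
Definition Delta (x : U) : U2 := fun p p' H H' =>
  \sum_(m <- monos) mul2 (cart2 (fun H H' => x m (addw H H'))) (Delta_mono m) p p' H H'.

(** Counit: eps(f(H) m) = f(0) eps(m), eps(X^+-) = 0 *)
Definition eps (x : U) : C := x M1 (0, 0).

(** Antipode: S(f(H) m) = S(m) f(-H), S anti-multiplicative *)
Definition SP : U := mulU (cartU (fun H => - q * (K1 H)^-1 * K2 H)) (monoU Mp).
Definition SM : U := mulU (cartU (fun H => q * K1 H * (K2 H)^-1)) (monoU Mm).
Definition Smono (m : mono) : U :=
  match m with
  | M1 => oneU | Mp => SP | Mm => SM | Mpm => mulU SM SP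
  end.
Definition S (x : U) : U := fun p H =>
  \sum_(m <- monos) mulU (Smono m) (cartU (fun H => x m (negw H))) p H.

Definition Ee : U := mulU (cartU K2) (monoU Mp).
Definition Ff : U := mulU (cartU (fun H => (K2 H)^-1)) (monoU Mm).

Definition Rfact (H H' : wts) : C :=
  cexp (- ('i * (pi : R)%:C / 4) * (H.2 * H'.2)) * qpow ((H.1 * H'.1 - H.2 * H'.2) / 4).
Definition Rmat : U2 :=
  mul2 (cart2 Rfact) (add2 one2 (scale2 (1 - q ^+ 2) (tens Ee Ff))).
Definition R21 : U2 := flip2 Rmat.

(** The linear map a (x) b |-> S(b) a on the completed tensor square:
    for a coefficient g(H (x) 1, 1 (x) H) = sum g1(H) (x) g2(H) one gets
    S(g2(H) n) g1(H) m = S(n) g(H, -H) m. *)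
Definition SbaMap (G : U2) : U := fun p H =>
  \sum_(m <- monos) \sum_(n <- monos)
    mulU (mulU (S (monoU n)) (cartU (fun H => G m n H (negw H)))) (monoU m) p H.

Definition uDr : U := SbaMap Rmat.

Definition nu : U :=
  mulU (mulU (cartU (fun H => cexp ('i * (pi : R)%:C / 4 * H.2 ^+ 2)
                               * qpow (- (H.1 ^+ 2 - H.2 ^+ 2) / 4)))
             (cartU (fun H => K1 H * K2 H)))
       (addU oneU (scaleU (1 - q ^+ 2)
                    (mulU (cartU (fun H => (K1 H)^-1 * (K2 H)^-1)) (mulU Ff Ee)))).

Definition nuinv : U :=
  mulU (mulU (cartU (fun H => cexp (- ('i * (pi : R)%:C / 4) * H.2 ^+ 2)
                               * qpow ((H.1 ^+ 2 - H.2 ^+ 2) / 4)))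
             (cartU (fun H => (K1 H)^-1 * (K2 H)^-1)))
       (addU oneU (scaleU (- (1 - q ^+ 2))
                    (mulU (cartU (fun H => K1 H * K2 H)) (mulU Ff Ee)))).

End Param.
End UqModel.

(* Every element of U_q (resp. of its completed tensor square) is a finite sum
   of PBW monomials 1, X^+, X^-, X^+X^- (resp. of tensor products of two of
   them) with Cartan coefficients f(H).  Moving a Cartan coefficient past a
   monomial shifts its weight argument, and for the exponential Cartan
   functions occurring here (K1, K2, the Gaussian prefactor of nu and the Cartan
   factor of R) such a shift only multiplies by -1, q^(+-1) or (K1 K2)^(+-1).
   Hence each ribbon identity reduces to computing normal forms of both sides
   and comparing finitely many coefficients, all rational identities in these
   exponentials.  R21 R is its Cartan part times (1 + nilpotent), which yields
   an explicit normal form for its inverse. *)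
From HB Require Import structures.
From mathcomp Require Import all_boot all_order all_algebra.
From mathcomp Require Import complex.
From mathcomp Require Import reals.
From mathcomp.analysis Require Import sequences exp trigo.
From mathcomp Require Import boolp.
From mathcomp Require Import ring.

Set Implicit Arguments.
Unset Strict Implicit.
Unset Printing Implicit Defensive.

Import GRing.Theory Num.Theory.
Local Open Scope ring_scope.
Local Open Scope complex_scope.

Section ComplexExp.
Variable R : realType.
Local Notation C := R[i].

Lemma cexpD (a b : C) : cexp (a + b) = cexp a * cexp b.
Proof.
case: a => a1 a2; case: b => b1 b2; rewrite /cexp /= expRD cosD sinD.
by apply/eqP; rewrite eq_complex /=; apply/andP; split; apply/eqP; ring.
Qed.

Lemma cexp0 : cexp (0 : C) = 1.
Proof.
rewrite /cexp /= expR0 cos0 sin0.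
by apply/eqP; rewrite eq_complex /=; apply/andP; split; apply/eqP; ring.
Qed.

Lemma cexp_neq0 (a : C) : cexp a != 0.
Proof.
apply/eqP => a0; have /eqP := cexpD a (- a).
by rewrite subrr cexp0 a0 mul0r oner_eq0.
Qed.

Lemma cexpN (a : C) : cexp (- a) = (cexp a)^-1.
Proof. by apply: (mulfI (cexp_neq0 a)); rewrite -cexpD subrr cexp0 mulfV ?cexp_neq0. Qed.

Lemma cexp_ipi : cexp ('i * (pi : R)%:C) = -1.
Proof.
rewrite /cexp /=.
have -> : (0 * pi - 1 * 0 : R) = 0 by ring.
have -> : (0 * 0 + 1 * pi : R) = pi by ring.
rewrite expR0 cospi sinpi.
by apply/eqP; rewrite eq_complex /=; apply/andP; split; apply/eqP; ring.
Qed.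

Lemma opp_cexp_ipi (z : C) : - z = cexp ('i * (pi : R)%:C) * z.
Proof. by rewrite cexp_ipi mulN1r. Qed.

Lemma opp_cexp_Nipi (z : C) : - z = cexp (- ('i * (pi : R)%:C)) * z.
Proof. by rewrite cexpN cexp_ipi invrN1 mulN1r. Qed.

End ComplexExp.

Arguments cexp : simpl never.

Section Cartan.
Variables (R : realType) (h : R[i]).
Local Notation C := R[i].
Local Notation kk H := (K1 h H * K2 h H).

Definition gnu (H : wts R) : C :=
  cexp ('i * (pi : R)%:C / 4 * H.2 ^+ 2) * qpow h (- (H.1 ^+ 2 - H.2 ^+ 2) / 4).

(* [congr cexp] compares exponents literally, so a sign has to be written as
   cexp (iπ) or cexp (-iπ), whichever makes the exponents agree on the nose. *)
Ltac cexp_eq :=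
  rewrite /gnu /Rfact /K1 /K2 /qpow /q /shift /negw /addw /= ?expr2 -?cexpD -?cexpN -?cexpD;
  by congr cexp; field.

Lemma K1_shiftP H : K1 h (shift H (wt R Mp)) = K1 h H / q h.
Proof. cexp_eq. Qed.
Lemma K1_shiftM H : K1 h (shift H (wt R Mm)) = K1 h H * q h.
Proof. cexp_eq. Qed.
Lemma K2_shiftP H : K2 h (shift H (wt R Mp)) = - q h * K2 h H.
Proof. rewrite mulNr opp_cexp_ipi; cexp_eq. Qed.
Lemma K2_shiftM H : K2 h (shift H (wt R Mm)) = - (K2 h H / q h).
Proof. rewrite opp_cexp_Nipi; cexp_eq. Qed.
Lemma gnu_shiftP H : gnu (shift H (wt R Mp)) = - (gnu H * kk H ^+ 2).
Proof. rewrite opp_cexp_ipi; cexp_eq. Qed.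
Lemma gnu_shiftM H : gnu (shift H (wt R Mm)) = - (gnu H / kk H ^+ 2).
Proof. rewrite opp_cexp_ipi; cexp_eq. Qed.
Lemma Rfact_shiftPl H H' : Rfact h (shift H (wt R Mp)) H' = Rfact h H H' / kk H'.
Proof. cexp_eq. Qed.
Lemma Rfact_shiftMl H H' : Rfact h (shift H (wt R Mm)) H' = Rfact h H H' * kk H'.
Proof. cexp_eq. Qed.
Lemma Rfact_shiftPr H H' : Rfact h H (shift H' (wt R Mp)) = Rfact h H H' / kk H.
Proof. cexp_eq. Qed.
Lemma Rfact_shiftMr H H' : Rfact h H (shift H' (wt R Mm)) = Rfact h H H' * kk H.
Proof. cexp_eq. Qed.
Lemma RfactC H H' : Rfact h H' H = Rfact h H H'.
Proof. cexp_eq. Qed.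
Lemma Rfact_diag H : Rfact h H (negw H) = gnu H.
Proof. cexp_eq. Qed.
Lemma gnuN H : gnu (negw H) = gnu H.
Proof. cexp_eq. Qed.
Lemma K1N H : K1 h (negw H) = (K1 h H)^-1.
Proof. cexp_eq. Qed.
Lemma K2N H : K2 h (negw H) = (K2 h H)^-1.
Proof. cexp_eq. Qed.
Lemma K1D H H' : K1 h (addw H H') = K1 h H * K1 h H'.
Proof. cexp_eq. Qed.
Lemma K2D H H' : K2 h (addw H H') = K2 h H * K2 h H'.
Proof. cexp_eq. Qed.
Lemma gnuD H H' : gnu (addw H H') = gnu H * gnu H' / Rfact h H H' ^+ 2.
Proof. cexp_eq. Qed.
Lemma K1_0 : K1 h (0, 0) = 1.
Proof. by rewrite -(cexp0 R); cexp_eq. Qed.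
Lemma K2_0 : K2 h (0, 0) = 1.
Proof. by rewrite -(cexp0 R); cexp_eq. Qed.
Lemma gnu_0 : gnu (0, 0) = 1.
Proof. by rewrite -(cexp0 R); cexp_eq. Qed.
Lemma gnuV H :
  cexp (- ('i * (pi : R)%:C / 4) * H.2 ^+ 2) * qpow h ((H.1 ^+ 2 - H.2 ^+ 2) / 4) = (gnu H)^-1.
Proof. cexp_eq. Qed.
End Cartan.

Section Calculus.
Variables (R : realType) (h : R[i]).
Local Notation C := R[i].

Lemma U_ext (x y : U R) : (forall p H, x p H = y p H) -> x = y.
Proof. by move=> e; apply/funext => p; apply/funext => H; exact: e. Qed.

Lemma U2_ext (x y : U2 R) : (forall p p' H H', x p p' H H' = y p p' H H') -> x = y.
Proof.
by move=> e; apply/funext => p; apply/funext => p'; apply/funext => H; apply/funext => H'.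
Qed.

Lemma sum_monos (F : mono -> C) : \sum_(m <- monos) F m = F M1 + F Mp + F Mm + F Mpm.
Proof. by rewrite /monos !big_cons big_nil addr0 !addrA. Qed.

Lemma dlC a b : dl R a b = dl R b a. Proof. by case: a; case: b. Qed.
Lemma dl_refl a : dl R a a = 1. Proof. by case: a. Qed.
Lemma dl_neq a b : a <> b -> dl R a b = 0. Proof. by case: a; case: b. Qed.

Lemma sum_monos1 a (F : mono -> C) : (forall m, m <> a -> F m = 0) ->
  \sum_(m <- monos) F m = F a.
Proof.
rewrite sum_monos; case: a => F0.
- by rewrite (F0 Mp) // (F0 Mm) // (F0 Mpm) // !addr0.
- by rewrite (F0 M1) // (F0 Mm) // (F0 Mpm) // add0r !addr0.
- by rewrite (F0 M1) // (F0 Mp) // (F0 Mpm) // !add0r addr0.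
- by rewrite (F0 M1) // (F0 Mp) // (F0 Mm) // !add0r.
Qed.
Arguments sum_monos1 : clear implicits.

Lemma shift0 (H : wts R) : shift H (0, 0) = H.
Proof. by case: H => a b; rewrite /shift !subr0. Qed.

Definition elU (f : wts R -> C) (a : mono) : U R := fun p H => dl R p a * f H.
Definition el2 (f : wts R -> wts R -> C) (a a' : mono) : U2 R :=
  fun p p' H H' => dl R p a * dl R p' a' * f H H'.

Lemma cartUE f : cartU f = elU f M1. Proof. by []. Qed.
Lemma cart2E f : cart2 f = el2 f M1 M1. Proof. by []. Qed.

Lemma monoUE m : @monoU R m = elU (fun _ => 1) m.
Proof. by apply: U_ext => p H; rewrite /monoU /elU dlC mulr1. Qed.

Lemma one2E : @one2 R = el2 (fun _ _ => 1) M1 M1.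
Proof. by apply: U2_ext => p p' H H'; rewrite /one2 /tens /oneU /monoU /el2 !(dlC M1) mulr1. Qed.

Lemma U_decomp (x : U R) :
  x = addU (addU (addU (elU (x M1) M1) (elU (x Mp) Mp)) (elU (x Mm) Mm)) (elU (x Mpm) Mpm).
Proof. by apply: U_ext => p H; rewrite /addU /elU; case: p; cbn [dl]; ring. Qed.

Lemma scale2_el2 (k : C) f a a' : scale2 k (el2 f a a') = el2 (fun H H' => k * f H H') a a'.
Proof. by apply: U2_ext => p p' H H'; rewrite /scale2 /el2; ring. Qed.

Lemma tens_el f g a b : tens (elU f a) (elU g b) = el2 (fun H H' => f H * g H') a b.
Proof. by apply: U2_ext => p p' H H'; rewrite /tens /elU /el2; ring. Qed.

Lemma tens_addl (x y z : U R) : tens (addU x y) z = add2 (tens x z) (tens y z).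
Proof. by apply: U2_ext => p p' H H'; rewrite /tens /addU /add2 mulrDl. Qed.

Lemma tens_addr (x y z : U R) : tens x (addU y z) = add2 (tens x y) (tens x z).
Proof. by apply: U2_ext => p p' H H'; rewrite /tens /addU /add2 mulrDr. Qed.

Lemma flip2_el2 f a a' : flip2 (el2 f a a') = el2 (fun H H' => f H' H) a' a.
Proof. by apply: U2_ext => p p' H H'; rewrite /flip2 /el2; ring. Qed.

Lemma flip2_add (x y : U2 R) : flip2 (add2 x y) = add2 (flip2 x) (flip2 y).
Proof. by []. Qed.

Lemma mulU_addl x y z p H : mulU h (addU x y) z p H = mulU h x z p H + mulU h y z p H.
Proof.
rewrite /mulU /addU -big_split; apply: eq_bigr => m _.
by rewrite -big_split; apply: eq_bigr => n _ /=; ring.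
Qed.

Lemma mulU_addr x y z p H : mulU h x (addU y z) p H = mulU h x y p H + mulU h x z p H.
Proof.
rewrite /mulU /addU -big_split; apply: eq_bigr => m _.
by rewrite -big_split; apply: eq_bigr => n _ /=; ring.
Qed.

Lemma mul2_addl x y z p p' H H' :
  mul2 h (add2 x y) z p p' H H' = mul2 h x z p p' H H' + mul2 h y z p p' H H'.
Proof.
rewrite /mul2 /add2 -big_split; apply: eq_bigr => m _.
rewrite -big_split; apply: eq_bigr => n _.
rewrite -big_split; apply: eq_bigr => m' _.
by rewrite -big_split; apply: eq_bigr => n' _ /=; ring.
Qed.

Lemma mul2_addr x y z p p' H H' :
  mul2 h x (add2 y z) p p' H H' = mul2 h x y p p' H H' + mul2 h x z p p' H H'.
Proof.
rewrite /mul2 /add2 -big_split; apply: eq_bigr => m _.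
rewrite -big_split; apply: eq_bigr => n _.
rewrite -big_split; apply: eq_bigr => m' _.
by rewrite -big_split; apply: eq_bigr => n' _ /=; ring.
Qed.

Lemma mulU_elU f g a b p H :
  mulU h (elU f a) (elU g b) p H = f H * g (shift H (wt R a)) * tab h a b p H.
Proof.
rewrite /mulU /elU (sum_monos1 a) => [|m /dl_neq->]; last by apply: big1 => n _; ring.
rewrite (sum_monos1 b) => [|n /dl_neq->]; last by ring.
by rewrite !dl_refl; ring.
Qed.

Lemma mul2_el2 f g a b a' b' p p' H H' :
  mul2 h (el2 f a a') (el2 g b b') p p' H H' =
  f H H' * g (shift H (wt R a)) (shift H' (wt R a')) * tab h a b p H * tab h a' b' p' H'.
Proof.
rewrite /mul2 /el2 (sum_monos1 a) => [|m /dl_neq->]; last first.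
  by apply: big1 => n _; apply: big1 => m' _; apply: big1 => n' _; ring.
rewrite (sum_monos1 b) => [|n /dl_neq->]; last first.
  by apply: big1 => m' _; apply: big1 => n' _; ring.
rewrite (sum_monos1 a') => [|m' /dl_neq->]; last by apply: big1 => n' _; ring.
rewrite (sum_monos1 b') => [|n' /dl_neq->]; last by ring.
by rewrite !dl_refl; ring.
Qed.

Lemma mulU_cartl f y p H : mulU h (cartU f) y p H = f H * y p H.
Proof. by rewrite /mulU !sum_monos /cartU shift0; case: p; cbn [dl tab]; ring. Qed.

Lemma mulU_cartr x f p H : mulU h x (cartU f) p H = x p H * f (shift H (wt R p)).
Proof. by rewrite /mulU !sum_monos /cartU; case: p; cbn [dl tab]; ring. Qed.

Lemma mulU_cartr_fun x f : mulU h x (cartU f) = fun p H => x p H * f (shift H (wt R p)).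
Proof. by apply: U_ext => p H; exact: mulU_cartr. Qed.

Lemma mulU_cart f g : mulU h (cartU f) (cartU g) = cartU (fun H => f H * g H).
Proof. by apply: U_ext => p H; rewrite mulU_cartl /cartU mulrCA. Qed.

Lemma mulU_monoUr x m p H : mulU h x (monoU m) p H = \sum_(k <- monos) x k H * tab h k m p H.
Proof.
rewrite /mulU; apply: eq_bigr => k _; rewrite /monoU.
rewrite (sum_monos1 m) ?dl_refl ?mulr1 // => n nm.
by rewrite dlC dl_neq // mulr0 mul0r.
Qed.

Lemma S_coef x p H : S h x p H = \sum_(m <- monos) Smono h m p H * x m (negw (shift H (wt R p))).
Proof. by rewrite /S; apply: eq_bigr => m _; rewrite mulU_cartr. Qed.

Lemma S_monoU n : S h (monoU n) = Smono h n.
Proof.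
apply: U_ext => p H; rewrite S_coef /monoU (sum_monos1 n) ?dl_refl ?mulr1 // => m mn.
by rewrite dlC dl_neq // mulr0.
Qed.

End Calculus.

Section Ribbon.
Variables (R : realType) (h : R[i]).
Hypothesis hq : q h ^+ 2 != 1.
Local Notation c := (1 - q h ^+ 2).
Local Notation kk H := (K1 h H * K2 h H).

Lemma q_neq0 : q h != 0. Proof. exact: cexp_neq0. Qed.
Lemma qpow_neq0 x : qpow h x != 0. Proof. exact: cexp_neq0. Qed.
Lemma K1_neq0 H : K1 h H != 0. Proof. exact: cexp_neq0. Qed.
Lemma K2_neq0 H : K2 h H != 0. Proof. by rewrite mulf_neq0 // cexp_neq0. Qed.
Lemma gnu_neq0 H : gnu h H != 0. Proof. by rewrite mulf_neq0 // cexp_neq0. Qed.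
Lemma Rfact_neq0 H H' : Rfact h H H' != 0. Proof. by rewrite mulf_neq0 // cexp_neq0. Qed.
Lemma qq_sub1_neq0 : q h * q h - 1 != 0. Proof. by rewrite subr_eq0 -expr2. Qed.

Ltac nonzero := repeat (apply/andP; split); match goal with
  | |- is_true (K1 _ _ != 0) => exact: K1_neq0
  | |- is_true (K2 _ _ != 0) => exact: K2_neq0
  | |- is_true (gnu _ _ != 0) => exact: gnu_neq0
  | |- is_true (Rfact _ _ _ != 0) => exact: Rfact_neq0
  | |- is_true (q _ != 0) => exact: q_neq0
  | |- is_true (q _ * q _ - 1 != 0) => exact: qq_sub1_neq0
  | |- is_true (cexp _ != 0) => exact: cexp_neq0
  | |- is_true (qpow _ _ != 0) => exact: qpow_neq0
  | |- is_true true => exact: isT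
  end.

Ltac field_nz := field; nonzero.

Ltac shift_weights := rewrite ?shift0 /Cc ?Rfact_diag ?K1N ?K2N ?gnuN ?K1D ?K2D ?gnuD
  ?Rfact_shiftPl ?Rfact_shiftMl ?Rfact_shiftPr ?Rfact_shiftMr ?gnu_shiftP ?gnu_shiftM
  ?K1_shiftP ?K1_shiftM ?K2_shiftP ?K2_shiftM.

Ltac compare_coefs := cbn [tab dl]; shift_weights; field_nz.

Lemma EeE : Ee h = elU (K2 h) Mp.
Proof. by apply: U_ext => p H; rewrite /Ee mulU_cartl /monoU /elU dlC mulrC. Qed.

Lemma FfE : Ff h = elU (fun H => (K2 h H)^-1) Mm.
Proof. by apply: U_ext => p H; rewrite /Ff mulU_cartl /monoU /elU dlC mulrC. Qed.

Definition FE_nf : U R :=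
  addU (elU (fun H => Cc h H / q h) M1) (elU (fun _ => - (q h)^-1) Mpm).

Lemma mulU_FfEe : mulU h (Ff h) (Ee h) = FE_nf.
Proof.
apply: U_ext => p H; rewrite FfE EeE mulU_elU /FE_nf /addU /elU.
by case: p; compare_coefs.
Qed.

Definition nu_nf : U R :=
  addU (elU (fun H => gnu h H * kk H + gnu h H * c * Cc h H / q h) M1)
       (elU (fun H => - (gnu h H * c / q h)) Mpm).

Lemma nuE : nu h = nu_nf.
Proof.
apply: U_ext => p H.
rewrite /nu mulU_cart mulU_cartl /addU /scaleU mulU_cartl mulU_FfEe.
rewrite /nu_nf /FE_nf /addU /elU /oneU /monoU /gnu.
by case: p; compare_coefs.
Qed.

Definition nuinv_nf : U R :=
  addU (elU (fun H => (gnu h H * kk H)^-1 - c * Cc h H / (gnu h H * q h)) M1)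
       (elU (fun H => c / (q h * gnu h H)) Mpm).

Lemma nuinvE : nuinv h = nuinv_nf.
Proof.
apply: U_ext => p H.
rewrite /nuinv mulU_cart mulU_cartl /addU /scaleU mulU_cartl mulU_FfEe gnuV.
rewrite /nuinv_nf /FE_nf /addU /elU /oneU /monoU.
by case: p; compare_coefs.
Qed.

Lemma nu_nuinv : mulU h (nu h) (nuinv h) = @oneU R.
Proof.
rewrite nuE nuinvE; apply: U_ext => p H.
rewrite /nu_nf /nuinv_nf !mulU_addl !mulU_addr !mulU_elU /oneU /monoU.
by case: p; compare_coefs.
Qed.

Lemma nuinv_nu : mulU h (nuinv h) (nu h) = @oneU R.
Proof.
rewrite nuE nuinvE; apply: U_ext => p H.
rewrite /nu_nf /nuinv_nf !mulU_addl !mulU_addr !mulU_elU /oneU /monoU.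
by case: p; compare_coefs.
Qed.

Lemma nu_central x : mulU h (nu h) x = mulU h x (nu h).
Proof.
rewrite nuE (U_decomp x); apply: U_ext => p H.
rewrite /nu_nf !mulU_addl !mulU_addr !mulU_elU.
by case: p; compare_coefs.
Qed.

Lemma tens_EF : tens (Ee h) (Ff h) = el2 (fun H H' => K2 h H / K2 h H') Mp Mm.
Proof. by rewrite EeE FfE tens_el. Qed.

Definition Rmat_nf : U2 R :=
  add2 (el2 (Rfact h) M1 M1) (el2 (fun H H' => c * Rfact h H H' * K2 h H / K2 h H') Mp Mm).

Lemma RmatE : Rmat h = Rmat_nf.
Proof.
apply: U2_ext => p p' H H'.
rewrite /Rmat cart2E one2E tens_EF scale2_el2 mul2_addr !mul2_el2 /Rmat_nf /add2 /el2.
by case: p; case: p'; compare_coefs.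
Qed.

Definition R21Rmat_nf : U2 R :=
  add2 (add2 (add2 (add2
    (el2 (fun H H' => Rfact h H H' ^+ 2) M1 M1)
    (el2 (fun H H' => c * Rfact h H H' ^+ 2 * K2 h H / K2 h H') Mp Mm))
    (el2 (fun H H' => - (c * Rfact h H H' ^+ 2 * K2 h H' * kk H' / (K2 h H * kk H))) Mm Mp))
    (el2 (fun H H' => - (c ^+ 2 * Rfact h H H' ^+ 2 * kk H' / (kk H * q h ^+ 2))) Mpm Mpm))
    (el2 (fun H H' => c ^+ 2 * Rfact h H H' ^+ 2 * kk H' * Cc h H / (kk H * q h ^+ 2)) M1 Mpm).

Lemma R21RmatE : mul2 h (R21 h) (Rmat h) = R21Rmat_nf.
Proof.
apply: U2_ext => p p' H H'.
rewrite /R21 RmatE /Rmat_nf flip2_add !flip2_el2 !mul2_addl !mul2_addr !mul2_el2.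
rewrite /R21Rmat_nf /add2 /el2.
by case: p; case: p'; rewrite ?(RfactC h H H'); compare_coefs.
Qed.

Definition R21Rmat_inv : U2 R :=
  add2 (add2 (add2 (add2
    (el2 (fun H H' => (Rfact h H H' ^+ 2)^-1) M1 M1)
    (el2 (fun H H' => c * K2 h H' * kk H / (K2 h H * kk H' * Rfact h H H' ^+ 2)) Mm Mp))
    (el2 (fun H H' => - (c * K2 h H * kk H' ^+ 2 / (K2 h H' * kk H ^+ 2 * Rfact h H H' ^+ 2))) Mp Mm))
    (el2 (fun H H' => - (c ^+ 2 * kk H' / (q h ^+ 2 * kk H * Rfact h H H' ^+ 2))) Mpm Mpm))
    (el2 (fun H H' => c ^+ 2 * kk H' * Cc h H' / (q h ^+ 2 * kk H * Rfact h H H' ^+ 2)) Mpm M1).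

Lemma mul2_inv_R21Rmat : mul2 h R21Rmat_inv (mul2 h (R21 h) (Rmat h)) = @one2 R.
Proof.
rewrite R21RmatE one2E; apply: U2_ext => p p' H H'.
rewrite /R21Rmat_inv /R21Rmat_nf !mul2_addl !mul2_addr !mul2_el2 /el2.
by case: p; case: p'; compare_coefs.
Qed.

Lemma mul2_R21Rmat_inv : mul2 h (mul2 h (R21 h) (Rmat h)) R21Rmat_inv = @one2 R.
Proof.
rewrite R21RmatE one2E; apply: U2_ext => p p' H H'.
rewrite /R21Rmat_inv /R21Rmat_nf !mul2_addl !mul2_addr !mul2_el2 /el2.
by case: p; case: p'; compare_coefs.
Qed.

Lemma DeltaPE :
  DeltaP h = add2 (el2 (fun _ H' => K1 h H') Mp M1) (el2 (fun H _ => (K2 h H)^-1) M1 Mp).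
Proof.
apply: U2_ext => p p' H H'.
by rewrite /DeltaP /add2 !monoUE !cartUE !tens_el /el2 mul1r mulr1.
Qed.

Lemma DeltaME :
  DeltaM h = add2 (el2 (fun _ H' => K2 h H') Mm M1) (el2 (fun H _ => (K1 h H)^-1) M1 Mm).
Proof.
apply: U2_ext => p p' H H'.
by rewrite /DeltaM /add2 !monoUE !cartUE !tens_el /el2 mul1r mulr1.
Qed.

Definition DeltaPM_nf : U2 R :=
  add2 (add2 (add2
    (el2 (fun _ H' => kk H') Mpm M1)
    (el2 (fun H H' => q h * K1 h H' / K1 h H) Mp Mm))
    (el2 (fun H H' => - (q h * K2 h H' / K2 h H)) Mm Mp))
    (el2 (fun H _ => (kk H)^-1) M1 Mpm).

Lemma mul2_DeltaPM : mul2 h (DeltaP h) (DeltaM h) = DeltaPM_nf.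
Proof.
apply: U2_ext => p p' H H'.
rewrite DeltaPE DeltaME !mul2_addl !mul2_addr !mul2_el2 /DeltaPM_nf /add2 /el2.
by case: p; case: p'; compare_coefs.
Qed.

Lemma Delta_nu : Delta h (nu h) = mul2 h R21Rmat_inv (tens (nu h) (nu h)).
Proof.
rewrite nuE; apply: U2_ext => p p' H H'.
rewrite /Delta sum_monos; cbn [Delta_mono].
rewrite mul2_DeltaPM DeltaPE DeltaME one2E !cart2E !mul2_addr !mul2_el2.
rewrite /nu_nf tens_addl !tens_addr !tens_el.
rewrite /R21Rmat_inv !mul2_addl !mul2_addr !mul2_el2 /DeltaPM_nf /add2 /el2 /elU /addU.
by case: p; case: p'; compare_coefs.
Qed.

Lemma SPE : SP h = elU (fun H => - q h * (K1 h H)^-1 * K2 h H) Mp.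
Proof. by apply: U_ext => p H; rewrite /SP mulU_cartl /monoU /elU dlC mulrC. Qed.

Lemma SME : SM h = elU (fun H => q h * K1 h H * (K2 h H)^-1) Mm.
Proof. by apply: U_ext => p H; rewrite /SM mulU_cartl /monoU /elU dlC mulrC. Qed.

Lemma mulU_SMSP : mulU h (SM h) (SP h) = addU (elU (fun H => - Cc h H) M1) (elU (fun _ => 1) Mpm).
Proof.
apply: U_ext => p H; rewrite SME SPE mulU_elU /addU /elU.
by case: p; compare_coefs.
Qed.

Lemma S_nu : S h (nu h) = nu h.
Proof.
rewrite nuE; apply: U_ext => p H.
rewrite S_coef sum_monos /Smono mulU_SMSP SPE SME /oneU monoUE /nu_nf /addU /elU.
by case: p; compare_coefs.
Qed.

Lemma eps_nu : eps (nu h) = 1.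
Proof.
rewrite nuE /eps /nu_nf /addU /elU; cbn [dl].
by rewrite /Cc gnu_0 K1_0 K2_0; field_nz.
Qed.

Definition uDr_nf : U R :=
  addU (elU (fun H => gnu h H + c * gnu h H * Cc h H / (q h * kk H)) M1)
       (elU (fun H => - (c * gnu h H / (q h * kk H))) Mpm).

Definition S_uDr_nf : U R :=
  addU (elU (gnu h) M1) (elU (fun H => - (c * gnu h H * kk H / q h)) Mpm).

Lemma uDrE : uDr h = uDr_nf.
Proof.
apply: U_ext => p H.
rewrite /uDr /SbaMap !sum_monos !S_monoU !mulU_cartr_fun !mulU_monoUr !sum_monos.
rewrite /Smono mulU_SMSP SPE SME /oneU monoUE RmatE /Rmat_nf /uDr_nf /add2 /el2 /addU /elU.
by case: p; compare_coefs.
Qed.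

Lemma S_uDrE : S h (uDr h) = S_uDr_nf.
Proof.
rewrite uDrE; apply: U_ext => p H.
rewrite S_coef sum_monos /Smono mulU_SMSP SPE SME /oneU monoUE /uDr_nf /S_uDr_nf /addU /elU.
by case: p; compare_coefs.
Qed.

Lemma nu_sqr : mulU h (nu h) (nu h) = mulU h (uDr h) (S h (uDr h)).
Proof.
rewrite S_uDrE uDrE nuE; apply: U_ext => p H.
rewrite /nu_nf /uDr_nf /S_uDr_nf !mulU_addl !mulU_addr !mulU_elU.
by case: p; compare_coefs.
Qed.

End Ribbon.

Theorem mainTheorem3 (R : realType) (h : R[i]) (hq : q h ^+ 2 != 1) :
  (* nu is central *)
  (forall x : U R, mulU h (nu h) x = mulU h x (nu h)) /\
  (* nu is invertible, with the stated inverse *)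
  mulU h (nu h) (nuinv h) = @oneU R /\ mulU h (nuinv h) (nu h) = @oneU R /\
  (* nu^2 = u S(u) *)
  mulU h (nu h) (nu h) = mulU h (uDr h) (S h (uDr h)) /\
  (* Delta nu = (R21 R)^-1 (nu (x) nu) *)
  (exists w : U2 R,
      mul2 h w (mul2 h (R21 h) (Rmat h)) = @one2 R /\
      mul2 h (mul2 h (R21 h) (Rmat h)) w = @one2 R /\
      Delta h (nu h) = mul2 h w (tens (nu h) (nu h))) /\
  (* eps nu = 1, S nu = nu *)
  eps (nu h) = 1 /\ S h (nu h) = nu h.
Proof.
split; first exact: nu_central hq.
split; first exact: nu_nuinv hq.
split; first exact: nuinv_nu hq.
split; first exact: nu_sqr hq.
split.
  exists (R21Rmat_inv h); split; first exact: mul2_inv_R21Rmat hq.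
  by split; [exact: mul2_R21Rmat_inv hq | exact: Delta_nu hq].
by split; [exact: eps_nu hq | exact: S_nu hq].
Qed.
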